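(* Let $X$ be any set and let $X_d$ denote $X$ with the discrete topology. Then: (1) $2^{X_d}_{SL}$ is an Alexandroff $T_0$-space. (2) For every $C\in 2^X$, the minimal open neighbourhood of $C$ in $2^{X_d}_{SL}$ is $\bigcap_{c\in C}L_{\{c\}}=\{D\in 2^X \mid C\subseteq D\}$. (3) The partial order on $2^X$ associated to the Alexandroff $T_0$-space $2^{X_d}_{SL}$ is given by $C\geq D$ if and only if $C\subseteq D$. (4) The identity map $I:2^{X_d}_{SL}\to 2^{X_d}_L$ is continuous, and its inverse $I^{-1}:2^{X_d}_L\to 2^{X_d}_{SL}$ is continuous at a point $C\in 2^X$ if and only if $C$ is a finite set. (5) The Alexandroff $T_0$-topology on $2^X$ associated to the opposite partial order (i.e. $C\geq D$ iff $D\subseteq C$) is exactly the upper semifinite topology, so the resulting space is $2^{X_d}_U$.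
   Context: $2^X$ denotes the set of all non-empty subsets of $X$ (all of which are closed in the discrete space $X_d$). For $U\subseteq X$ put $L_U=\{F\subseteq X\mid F\neq\emptyset,\ F\cap U\neq\emptyset\}$. The lower semifinite topology on $2^X$ is generated by the subbase $\{L_U\mid U\subseteq X\}$; the space is denoted $2^{X_d}_L$. The strong lower semifinite topology on $2^X$ is the topology generated by the family $SL=\{\bigcap_{i\in I}L_{U_i}\mid I \text{ any index set with } \mathrm{Card}(I)\le\mathrm{Card}(X),\ U_i\subseteq X\}$; the space is denoted $2^{X_d}_{SL}$. The upper semifinite topology on $2^X$ is the topology with base $\{\{F\in 2^X\mid F\subseteq U\}\mid U\subseteq X\}$; the space is denoted $2^{X_d}_U$. An Alexandroff space is a topological space in which arbitrary intersections of open sets are open; each point $x$ then has a minimal open neighbourhood $U_x$. For an Alexandroff $T_0$-space the associated partial order is $y\le x$ iff $y\in U_x$ (so $U_x=\{y\mid y\le x\}$); conversely a partial order determines the Alexandroff $T_0$-topology whose open sets are the down-sets. *)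

From mathcomp Require Import all_boot.
From mathcomp Require Import boolp classical_sets cardinality.
Unset Printing Implicit Defensive.
Local Open Scope classical_set_scope.

Definition is_topology {T : Type} (tau : set (set T)) : Prop :=
  [/\ tau setT,
      (forall F : set (set T), F `<=` tau -> tau (\bigcup_(A in F) A)) &
      (forall A B, tau A -> tau B -> tau (A `&` B))].

Definition generated {T : Type} (S : set (set T)) : set (set T) :=
  fun O => forall tau, is_topology tau -> S `<=` tau -> tau O.

Definition alexandroff {T : Type} (tau : set (set T)) : Prop :=
  forall F : set (set T), F `<=` tau -> tau (\bigcap_(A in F) A).

Definition T0 {T : Type} (tau : set (set T)) : Prop :=
  forall x y : T, x <> y ->
    exists O, tau O /\ ((O x /\ ~ O y) \/ (O y /\ ~ O x)).

Definition min_open_nbhd {T : Type} (tau : set (set T)) (x : T) (U : set T) : Prop :=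
  [/\ tau U, U x & forall V, tau V -> V x -> U `<=` V].

Definition assoc_le {T : Type} (tau : set (set T)) (y x : T) : Prop :=
  forall V, tau V -> V x -> V y.

(** Alexandroff topology of an order: the down-sets. *)
Definition downsets {T : Type} (le : T -> T -> Prop) : set (set T) :=
  fun O => forall x y, O x -> le y x -> O y.

Definition continuous_map {T1 T2 : Type} (tau1 : set (set T1)) (tau2 : set (set T2))
  (f : T1 -> T2) : Prop :=
  forall V, tau2 V -> tau1 (f @^-1` V).

Definition continuous_at_pt {T1 T2 : Type} (tau1 : set (set T1)) (tau2 : set (set T2))
  (f : T1 -> T2) (x : T1) : Prop :=
  forall V, tau2 V -> V (f x) ->
    exists U, [/\ tau1 U, U x & forall y, U y -> V (f y)].

(** The hyperspace 2^X of non-empty subsets of X. *)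
Definition hyp (X : Type) : Type := {F : set X | F !=set0}.

Definition hval {X : Type} (F : hyp X) : set X := proj1_sig F.

Definition Lset {X : Type} (U : set X) : set (hyp X) :=
  [set F | hval F `&` U !=set0].

Definition lower_topology (X : Type) : set (set (hyp X)) :=
  generated [set O | exists U : set X, O = Lset U].

(** The family SL: intersections of at most Card(X) many L_U. *)
Definition SL_family (X : Type) : set (set (hyp X)) :=
  [set O | exists (I : Type) (f : I -> X), injective f /\
             exists U : I -> set X, O = \bigcap_(i in [set: I]) Lset (U i)].

Definition strong_lower_topology (X : Type) : set (set (hyp X)) :=
  generated (SL_family X).

Definition upper_topology (X : Type) : set (set (hyp X)) :=
  generated [set O | exists U : set X, O = [set F | hval F `<=` U]].

From mathcomp Require Import all_boot.
From mathcomp Require Import boolp classical_sets cardinality.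
From mathcomp Require Import finmap.
Set Implicit Arguments.
Unset Strict Implicit.
Local Open Scope classical_set_scope.

(* Every topology in the theorem is the Alexandroff topology
   of a partial order on the hyperspace 2^X: the strong lower semifinite
   topology is the family of down-sets of the reverse inclusion order
   (D below C iff C is contained in D), and the upper semifinite topology is
   the family of down-sets of inclusion.  Both identifications then reduce to
   checking that the generators are down-sets and that principal down-sets
   are generators.  For (4), every set L_U is a down-set, which gives the
   continuity of the identity; conversely a lower semifinite open set is
   determined on finite subsets of its points, which forces C to be finite
   when the principal down-set of C is lower open, and for finite C that
   principal down-set is a finite intersection of sets L_{c}. *)

Section Generated.
Variable T : Type.

Lemma generated_topology (S : set (set T)) : is_topology (generated S).
Proof.
split.
- by move=> tau [].
- move=> F FS tau tau_top S_tau; case: (tau_top) => _ tau_bigcup _.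
  by apply: tau_bigcup => A FA; exact: FS.
- move=> A B genA genB tau tau_top S_tau; case: (tau_top) => _ _ tau_setI.
  by apply: tau_setI; [apply: genA | apply: genB].
Qed.

Lemma generated_sub (S : set (set T)) : S `<=` generated S.
Proof. by move=> A SA tau _ S_tau; exact: S_tau. Qed.

Lemma generated_min (S tau : set (set T)) :
  is_topology tau -> S `<=` tau -> generated S `<=` tau.
Proof. by move=> tau_top S_tau O genO; exact: genO. Qed.

Lemma generated_local (S : set (set T)) (O : set T) (B : T -> set T) :
  (forall x, O x -> [/\ S (B x), B x x & B x `<=` O]) -> generated S O.
Proof.
move=> hB.
have -> : O = \bigcup_(A in [set A | exists2 x, O x & A = B x]) A.
  apply/seteqP; split => [x Ox|x [A [y Oy ->] Byx]].
    by exists (B x); [exists x | case: (hB x Ox)].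
  by case: (hB y Oy) => _ _; apply.
case: (generated_topology S) => _ gen_bigcup _.
by apply: gen_bigcup => A [y Oy ->]; apply: generated_sub; case: (hB y Oy).
Qed.

End Generated.

Section Downsets.
Variables (T : Type) (le : T -> T -> Prop).

Lemma downsets_topology : is_topology (downsets le).
Proof.
split => //.
- by move=> F F_down x y [A FA Ax] yx; exists A => //; exact: (F_down A FA x).
- by move=> A B downA downB x y [Ax Bx] yx; split; [apply: (downA x) | apply: (downB x)].
Qed.

Lemma downsets_alexandroff : alexandroff (downsets le).
Proof. by move=> F F_down x y Fx yx A FA; apply: (F_down A FA x) => //; exact: Fx. Qed.

Definition down (x : T) : set T := [set y | le y x].

Hypothesis le_refl : forall x, le x x.
Hypothesis le_trans : forall x y z, le x y -> le y z -> le x z.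

Lemma down_open (x : T) : downsets le (down x).
Proof. by move=> y z yx zy; exact: le_trans zy yx. Qed.

Lemma down_min_open_nbhd (x : T) : min_open_nbhd (downsets le) x (down x).
Proof.
split; [exact: down_open | exact: le_refl |].
by move=> V downV Vx y yx; exact: (downV x).
Qed.

Lemma assoc_le_downsets (x y : T) : assoc_le (downsets le) y x <-> le y x.
Proof.
split; first by move=> yx; apply: (yx (down x)); [exact: down_open | exact: le_refl].
by move=> yx V downV Vx; exact: (downV x).
Qed.

Hypothesis le_anti : forall x y, le x y -> le y x -> x = y.

Lemma downsets_T0 : T0 (downsets le).
Proof.
move=> x y xy; have [yx|yx] := pselect (le y x).
- exists (down y); split; first exact: down_open.
  by right; split; [exact: le_refl | by move=> xy'; apply: xy; exact: le_anti].
- by exists (down x); split; [exact: down_open | left; split; [exact: le_refl |]].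
Qed.

Lemma generated_downsets (S : set (set T)) :
  S `<=` downsets le -> (forall x, S (down x)) -> generated S = downsets le.
Proof.
move=> S_down S_principal; apply/seteqP; split.
  exact: generated_min downsets_topology S_down.
move=> O downO; apply: (@generated_local _ _ _ down) => x Ox.
by split; [exact: S_principal | exact: le_refl | move=> y; exact: downO].
Qed.

End Downsets.

Section Hyperspace.
Variable X : Type.

Lemma hval_inj (C D : hyp X) : hval C = hval D -> C = D.
Proof.
case: C D => [c c0] [d d0] /= cd; subst d.
by congr exist; exact: Prop_irrelevance.
Qed.

Definition supset_le (D C : hyp X) : Prop := hval C `<=` hval D.

Definition above (A : set X) : set (hyp X) := [set D | A `<=` hval D].

Lemma supset_le_refl (C : hyp X) : supset_le C C.
Proof. exact: subset_refl. Qed.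

Lemma supset_le_trans (C D E : hyp X) :
  supset_le C D -> supset_le D E -> supset_le C E.
Proof. by move=> CD DE; exact: subset_trans DE CD. Qed.

Lemma supset_le_anti (C D : hyp X) : supset_le C D -> supset_le D C -> C = D.
Proof. by move=> CD DC; apply: hval_inj; apply/seteqP; split. Qed.

Lemma Lset_down (U : set X) : downsets supset_le (Lset U).
Proof. by move=> C D [x [Cx Ux]] CD; exists x; split => //; exact: CD. Qed.

(* The principal down-set of C is the intersection of the sets L_{c}, c in C,
   indexed by the points of C, hence belongs to the family SL. *)
Lemma bigcap_Lset1 (C : hyp X) :
  \bigcap_(c in hval C) Lset [set c] = down supset_le C.
Proof.
apply/seteqP; split => D.
  by move=> DC c Cc; case: (DC c Cc) => x [Dx /= <-].
by move=> CD c Cc; exists c; split => //; exact: CD.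
Qed.

Lemma down_SL_family (C : hyp X) : SL_family X (down supset_le C).
Proof.
exists {c : X | hval C c}, (@proj1_sig _ _); split.
  by move=> [a a0] [b b0] /= ab; subst b; congr exist; exact: Prop_irrelevance.
exists (fun i => [set proj1_sig i]); rewrite -bigcap_Lset1.
apply/seteqP; split => D DC.
  by move=> [c Cc] _; exact: DC.
by move=> c Cc; exact: (DC (exist _ c Cc)).
Qed.

Lemma SL_family_down : SL_family X `<=` downsets supset_le.
Proof.
move=> O [J [f [_ [U ->]]]] C D CU DC i _.
exact: Lset_down (CU i I) DC.
Qed.

Lemma strong_lower_downsets : strong_lower_topology X = downsets supset_le.
Proof.
exact: (generated_downsets supset_le_refl SL_family_down down_SL_family).
Qed.

Lemma lower_downsets : lower_topology X `<=` downsets supset_le.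
Proof.
apply: generated_min; first exact: downsets_topology.
by move=> O [U ->]; exact: Lset_down.
Qed.

(* A lower semifinite open set O is finitely determined: each C in O has a
   finite subset F such that every D containing F is in O. *)
Definition finitely_determined (O : set (hyp X)) : Prop :=
  forall C, O C -> exists2 F : set X,
    finite_set F /\ F `<=` hval C & above F `<=` O.

(* Finitely determined sets form a topology (finite unions of witnesses). *)
Lemma finitely_determined_topology : is_topology finitely_determined.
Proof.
split.
- by move=> C _; exists set0; [split; [exact: finite_set0 |] |].
- move=> F F_fd C [A FA AC]; have [G [fG GC] GA] := F_fd A FA C AC.
  by exists G => // D GD; exists A => //; exact: GA.
- move=> A B fdA fdB C [AC BC].
  have [G [fG GC] GA] := fdA C AC; have [H [fH HC] HB] := fdB C BC.
  exists (G `|` H); first by split; [rewrite finite_setU | move=> x [|]; [exact: GC|exact: HC]].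
  by move=> D GHD; split; [apply: GA | apply: HB] => x xD; apply: GHD; [left|right].
Qed.

Lemma lower_finitely_determined : lower_topology X `<=` finitely_determined.
Proof.
apply: generated_min; first exact: finitely_determined_topology.
move=> O [U ->] C [x [Cx Ux]].
exists [set x]; first by split; [exact: finite_set1 | move=> y ->].
by move=> D xD; exists x; split => //; exact: xD.
Qed.

(* For a finite list s of points, the sets containing s form the finite
   intersection of the sets L_{x}, x in s. *)
Lemma lower_above_seq (s : seq {classic X}) :
  lower_topology X (above [set x | x \in s]).
Proof.
have [lower_setT _ lower_setI] := generated_topology [set O | exists U : set X, O = Lset U].
elim: s => [|a s IH].
  have -> : above [set x : {classic X} | x \in [::]] = setT by apply/seteqP; split.
  exact: lower_setT.
have -> : above [set x : {classic X} | x \in a :: s] =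
          Lset [set a] `&` above [set x : {classic X} | x \in s].
  apply/seteqP; split => D.
    move=> sD; split; first by exists a; split => //; apply: sD; rewrite /= mem_head.
    by move=> x xs; apply: sD; rewrite /= in_cons xs orbT.
  case=> -[y [Dy /= ya]] sD x /=; rewrite in_cons => /orP [/eqP ->|xs]; first by rewrite -ya.
  exact: sD.
by apply: lower_setI IH; apply: generated_sub; exists [set a].
Qed.

Lemma lower_above (A : set X) : finite_set A -> lower_topology X (above A).
Proof.
move=> fA; have [Y ->] := (@finite_fsetP {classic X} A).1 fA.
exact: (lower_above_seq Y).
Qed.

Lemma continuous_at_id_finite (C : hyp X) :
  continuous_at_pt (lower_topology X) (downsets supset_le) id C
    <-> finite_set (hval C).
Proof.
split => [cont|fC].
- have [U [lowerU UC U_C]] :=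
    cont _ (@down_open _ _ supset_le_trans C) (supset_le_refl (C := C)).
  have [F [fF FC] FU] := lower_finitely_determined lowerU UC.
  have [c0 Cc0] := proj2_sig C.
  have Fc0 : (F `|` [set c0]) !=set0 by exists c0; right.
  have C_Fc0 : hval C `<=` F `|` [set c0].
    by apply: (U_C (exist _ _ Fc0)); apply: FU => x Fx; left.
  by apply: (sub_finite_set C_Fc0); rewrite finite_setU; split => //; exact: finite_set1.
- move=> V downV VC; exists (above (hval C)).
  by split; [exact: lower_above | exact: subset_refl | move=> D CD; exact: (downV C)].
Qed.

Lemma upper_downsets :
  upper_topology X = downsets (fun D C : hyp X => hval D `<=` hval C).
Proof.
apply: generated_downsets.
- by move=> C; exact: subset_refl.
- by move=> O [U ->] C D CU DC; exact: subset_trans DC CU.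
- by move=> C; exists (hval C).
Qed.

End Hyperspace.

Theorem mainTheorem3 (X : Type) :
  (* (1) *)
  (is_topology (strong_lower_topology X) /\
   alexandroff (strong_lower_topology X) /\ T0 (strong_lower_topology X)) /\
  (* (2) *)
  (forall C : hyp X,
     min_open_nbhd (strong_lower_topology X) C
       (\bigcap_(c in hval C) Lset [set c]) /\
     \bigcap_(c in hval C) Lset [set c] = [set D : hyp X | hval C `<=` hval D]) /\
  (* (3) C >= D iff C is a subset of D *)
  (forall C D : hyp X,
     assoc_le (strong_lower_topology X) D C <-> hval C `<=` hval D) /\
  (* (4) *)
  (continuous_map (strong_lower_topology X) (lower_topology X) id /\
   forall C : hyp X,
     continuous_at_pt (lower_topology X) (strong_lower_topology X) id C
       <-> finite_set (hval C)) /\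
  (* (5) opposite order: C >= D iff D is a subset of C *)
  downsets (fun D C : hyp X => hval D `<=` hval C) = upper_topology X.
Proof.
rewrite strong_lower_downsets.
split; [|split; [|split; [|split]]].
- split; [exact: downsets_topology | split; first exact: downsets_alexandroff].
  exact: downsets_T0 (@supset_le_refl X) (@supset_le_trans X) (@supset_le_anti X).
- move=> C; rewrite bigcap_Lset1; split => //.
  exact: down_min_open_nbhd (@supset_le_refl X) (@supset_le_trans X) C.
- move=> C D; exact: assoc_le_downsets (@supset_le_refl X) (@supset_le_trans X) C D.
- split; [exact: lower_downsets | exact: continuous_at_id_finite].
- by rewrite upper_downsets.
Qed.
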